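(* Let $d\ge2$, $U_0$ a non-empty bounded Borel subset of $\mathbb{R}^d$, $U_1=\mathbb{R}^d\setminus U_0$. For $x\in\mathbb{R}^d$ and integers $\ell'>\ell$ set $\beta'=\frac{1}{|B(x,2^{-\ell})|}\int_{B(x,2^{-\ell})}\widehat\sigma_{\ell'}(y)\,dy$. Then for every $0\le\delta\le\beta'\wedge(1-\beta')$ at least one of the following holds: (i) $\mu_{x,\ell}(\{\widehat\sigma_{\ell'}>\beta'+\delta\})\ge\frac\delta2$ and $\mu_{x,\ell}(\{\widehat\sigma_{\ell'}<\beta'-\delta\})\ge\frac\delta2$; (ii) $\mu_{x,\ell}(\{\beta'-\delta\le\widehat\sigma_{\ell'}\le\beta'+\delta\})\ge\frac14-\frac\delta2$.
   Context: $B(x,r)$ is the closed sup-norm ball, $|\cdot|$ Lebesgue measure, $\widehat\sigma_\ell(x)=|B(x,2^{-\ell})\cap U_1|/|B(x,2^{-\ell})|$, and $\mu_{x,\ell}(dy)=|B(x,2^{-\ell})|^{-1}1_{B(x,2^{-\ell})}(y)\,dy$ is normalized Lebesgue measure on $B(x,2^{-\ell})$. *)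

From HB Require Import structures.
From mathcomp Require Import all_boot all_order all_algebra.
From mathcomp Require Import all_classical all_reals all_analysis.
Set Implicit Arguments. Unset Strict Implicit. Unset Printing Implicit Defensive.
Import Order.TTheory GRing.Theory Num.Theory.
Local Open Scope classical_set_scope.
Local Open Scope ring_scope.

(* R^d is modelled as d.-tuple R, with the library's product sigma-algebra
   (generated by the coordinate projections), i.e. the Borel sigma-algebra. *)

(* lam is (d-dimensional) Lebesgue measure: it gives every closed box its volume.
   This determines lam uniquely on the Borel sets. *)
Definition is_lebesgue_nd (R : realType) (d : nat)
  (lam : {measure set (d.-tuple R) -> \bar R}) : Prop :=
  forall a b : d.-tuple R, (forall i, tnth a i <= tnth b i) ->
    lam [set y | forall i, tnth a i <= tnth y i <= tnth b i] =
    (\prod_(i < d) (tnth b i - tnth a i))%:E.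

Definition supball (R : realType) (d : nat) (x : d.-tuple R) (r : R)
  : set (d.-tuple R) :=
  [set y | forall i, `|tnth y i - tnth x i| <= r].

Definition bounded_nd (R : realType) (d : nat) (A : set (d.-tuple R)) : Prop :=
  exists M : R, forall y, A y -> forall i, `|tnth y i| <= M.

Definition mu_ball (R : realType) (d : nat)
  (lam : {measure set (d.-tuple R) -> \bar R}) (x : d.-tuple R) (l : int)
  (A : set (d.-tuple R)) : R :=
  fine (lam (supball x (2%:R ^ (- l)) `&` A)) /
  fine (lam (supball x (2%:R ^ (- l)))).

Definition sigma_hat (R : realType) (d : nat)
  (lam : {measure set (d.-tuple R) -> \bar R}) (U1 : set (d.-tuple R))
  (l : int) (x : d.-tuple R) : R :=
  mu_ball lam x l U1.

Definition beta' (R : realType) (d : nat)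
  (lam : {measure set (d.-tuple R) -> \bar R}) (U1 : set (d.-tuple R))
  (x : d.-tuple R) (l l' : int) : R :=
  Rintegral lam (supball x (2%:R ^ (- l))) (sigma_hat lam U1 l') /
  fine (lam (supball x (2%:R ^ (- l)))).

From HB Require Import structures.
From mathcomp Require Import all_boot all_order all_algebra.
From mathcomp Require Import all_classical all_reals all_analysis.
From mathcomp Require Import measurable_realfun lra.
Import Order.TTheory GRing.Theory Num.Theory.
Local Open Scope classical_set_scope.
Local Open Scope ring_scope.

(* On the ball B := B(x, 2^-l) the function s := sigma-hat_l' takes values in
   [0, 1] and has mean b.  Split B into the parts where s < b - delta,
   |s - b| <= delta and s > b + delta, of masses a, m, c.  Bounding s on each
   part by the ends of its range and integrating gives
     b (a + m + c) <= (b - delta) a + (b + delta) m + c   and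
     (b - delta) m + (b + delta) c <= b (a + m + c),
   and if m < (1/4 - delta/2)(a + m + c) these force a and c to be at least
   delta/2 (a + m + c).  The measure-theoretic input is that s is measurable,
   because y |-> |B(y, r) n U1| is a section measure of a measurable subset of
   R^d x R^d.  None of d >= 2, the boundedness and nonemptiness of U0, and
   l < l' is needed. *)

Lemma mean_mass_split (R : realFieldType) (a m c b dl : R) :
  0 <= a -> 0 <= m -> 0 <= c -> 0 <= dl -> dl <= b -> dl <= 1 - b ->
  b * (a + m + c) <= (b - dl) * a + (b + dl) * m + c ->
  (b - dl) * m + (b + dl) * c <= b * (a + m + c) ->
  (dl / 2 * (a + m + c) <= c /\ dl / 2 * (a + m + c) <= a) \/
  (4^-1 - dl / 2) * (a + m + c) <= m.
Proof.
move=> a0 m0 c0 d0 db d1 hup hlow.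
have [|m_small] := leP ((4^-1 - dl / 2) * (a + m + c)) m; first by right.
by left; split; rewrite leNgt; apply/negP => small;
  (have dl_pos : 0 < dl by nra); nra.
Qed.

Section Rintegral_bounds.
Context {d} {T : measurableType d} {R : realType} (mu : {measure set T -> \bar R}).

Lemma integrable_in01 (A : set T) (g : T -> R) :
  measurable A -> (mu A < +oo)%E -> measurable_fun A g ->
  (forall y, A y -> 0 <= g y <= 1) -> mu.-integrable A (EFin \o g).
Proof.
move=> mA Afin mg g01; apply: measurable_bounded_integrable => //.
rewrite /bounded_near; near=> M => y Ay /=; have /andP[g0 g1] := g01 y Ay.
by rewrite ger0_norm// (le_trans g1)//; near: M; exact: nbhs_pinfty_ge.
Unshelve. all: end_near. Qed.

Lemma Rintegral_setU3 (A1 A2 A3 : set T) (g : T -> R) :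
  measurable A1 -> measurable A2 -> measurable A3 ->
  [disjoint A1 & A2] -> [disjoint A1 `|` A2 & A3] ->
  mu.-integrable (A1 `|` A2 `|` A3) (EFin \o g) ->
  Rintegral mu (A1 `|` A2 `|` A3) g =
  Rintegral mu A1 g + Rintegral mu A2 g + Rintegral mu A3 g.
Proof.
move=> mA1 mA2 mA3 A12 A123 ig.
have mA12 : measurable (A1 `|` A2) by exact: measurableU.
rewrite Rintegral_setU// Rintegral_setU//.
by apply: integrableS ig => //; exact: measurableU.
Qed.

Section Rintegral_cst_bounds.
Variables (A : set T) (g : T -> R) (k : R).
Hypotheses (mA : measurable A) (Afin : (mu A < +oo)%E)
  (ig : mu.-integrable A (EFin \o g)).

Let integrable_cst : mu.-integrable A (EFin \o cst k).
Proof. exact: measurable_bounded_integrable (bounded_cst _ _). Qed.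

Lemma Rintegral_le_cst : (forall y, A y -> g y <= k) ->
  Rintegral mu A g <= k * fine (mu A).
Proof. by move=> gk; rewrite -Rintegral_cst//; apply: le_Rintegral. Qed.

Lemma Rintegral_ge_cst : (forall y, A y -> k <= g y) ->
  k * fine (mu A) <= Rintegral mu A g.
Proof. by move=> kg; rewrite -Rintegral_cst//; apply: le_Rintegral. Qed.

End Rintegral_cst_bounds.
End Rintegral_bounds.

Section tails_or_middle.
Context {d} {T : measurableType d} {R : realType} (mu : {measure set T -> \bar R}).
Variables (B : set T) (g : T -> R) (b dl : R).
Hypotheses (mB : measurable B) (Bfin : (mu B < +oo)%E) (mg : measurable_fun B g)
  (g01 : forall y, B y -> 0 <= g y <= 1) (dl0 : 0 <= dl).

Let Al := B `&` [set y | g y < b - dl].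
Let Am := B `&` [set y | b - dl <= g y <= b + dl].
Let Ah := B `&` [set y | g y > b + dl].

Let mAl : measurable Al.
Proof.
have -> : Al = B `&` g @^-1` `]-oo, b - dl[.
  by apply/seteqP; split => y [By]; rewrite /= in_itv.
exact: mg.
Qed.

Let mAm : measurable Am.
Proof.
have -> : Am = B `&` g @^-1` `[b - dl, b + dl].
  by apply/seteqP; split => y [By]; rewrite /= in_itv.
exact: mg.
Qed.

Let mAh : measurable Ah.
Proof.
have -> : Ah = B `&` g @^-1` `]b + dl, +oo[.
  by apply/seteqP; split => y [By]; rewrite /= in_itv /= andbT.
exact: mg.
Qed.

Let B_partition : B = Al `|` Am `|` Ah.
Proof.
apply/seteqP; split => y; last by case=> [[]|] [].
move=> By; have [gl|gl] := ltP (g y) (b - dl); first by left; left.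
have [gh|gh] := leP (g y) (b + dl); first by left; right; split => //; apply/andP.
by right.
Qed.

Let disj_Al_Am : [disjoint Al & Am].
Proof. by apply/disj_setPS => y [[_ /= gl] [_ /andP[gm _]]]; lra. Qed.

Let disj_AlAm_Ah : [disjoint Al `|` Am & Ah].
Proof.
apply/disj_setPS => y [[[_ /= gl]|[_ /andP[_ gm]]] [_ /= gh]].
- by move: dl0; lra. (* lra does not see section hypotheses *)
- by have := le_lt_trans gm gh; rewrite ltxx.
Qed.

Let Rintegral_split (f : T -> R) : mu.-integrable B (EFin \o f) ->
  Rintegral mu B f = Rintegral mu Al f + Rintegral mu Am f + Rintegral mu Ah f.
Proof. by rewrite {1 2}B_partition; exact: Rintegral_setU3. Qed.

Lemma tails_or_middle_of_mean : Rintegral mu B g = b * fine (mu B) ->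
  dl <= b -> dl <= 1 - b ->
  (dl / 2 * fine (mu B) <= fine (mu Ah) /\ dl / 2 * fine (mu B) <= fine (mu Al)) \/
  (4^-1 - dl / 2) * fine (mu B) <= fine (mu Am).
Proof.
move=> gmean db d1b.
have ig : mu.-integrable B (EFin \o g) by exact: integrable_in01.
have part_fin A : A `<=` B -> measurable A -> (mu A < +oo)%E.
  by move=> AB mA; apply: le_lt_trans Bfin; apply: le_measure; rewrite ?inE.
have part_le A k : A `<=` B -> measurable A -> (forall y, A y -> g y <= k) ->
    Rintegral mu A g <= k * fine (mu A).
  by move=> AB mA; apply: Rintegral_le_cst (part_fin _ AB mA) (integrableS _ _ AB ig).
have part_ge A k : A `<=` B -> measurable A -> (forall y, A y -> k <= g y) ->
    k * fine (mu A) <= Rintegral mu A g.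
  by move=> AB mA; apply: Rintegral_ge_cst (part_fin _ AB mA) (integrableS _ _ AB ig).
have mass_split : fine (mu B) = fine (mu Al) + fine (mu Am) + fine (mu Ah).
  rewrite -[LHS]mul1r -Rintegral_cst// Rintegral_split; last first.
    exact: measurable_bounded_integrable (bounded_cst _ _).
  by rewrite !Rintegral_cst// !mul1r.
have := Rintegral_split g ig; rewrite gmean mass_split => Isplit.
apply: (@mean_mass_split _ _ _ _ b); rewrite ?fine_ge0 ?measure_ge0// ?Isplit.
- apply: lerD; first apply: lerD.
  + by apply: (part_le Al _ (@subIsetl _ _ _)) => // y [_ /ltW].
  + by apply: (part_le Am _ (@subIsetl _ _ _)) => // y [_ /andP[]].
  + by rewrite -[leRHS]mul1r; apply: (part_le Ah _ (@subIsetl _ _ _)) => // y [/g01 /andP[]].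
- rewrite -[X in X <= _]add0r -(mul0r (fine (mu Al))) addrA.
  apply: lerD; first apply: lerD.
  + by apply: (part_ge Al _ (@subIsetl _ _ _)) => // y [/g01 /andP[]].
  + by apply: (part_ge Am _ (@subIsetl _ _ _)) => // y [_ /andP[]].
  + by apply: (part_ge Ah _ (@subIsetl _ _ _)) => // y [_ /ltW].
Qed.

End tails_or_middle.

Section supball.
Context {R : realType} {d : nat}.
Implicit Types (x y : d.-tuple R) (r : R).

Lemma measurable_supball_rel r :
  measurable [set p : d.-tuple R * d.-tuple R | forall i, `|tnth p.2 i - tnth p.1 i| <= r].
Proof.
have -> : [set p : d.-tuple R * d.-tuple R | forall i, `|tnth p.2 i - tnth p.1 i| <= r] =
    \bigcap_(i in [set: 'I_d])
      ((fun p : d.-tuple R * d.-tuple R => `|tnth p.2 i - tnth p.1 i|) @^-1` `]-oo, r]).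
  apply/seteqP; split => p /=; first by move=> pr i _ /=; rewrite in_itv /= pr.
  by move=> pr i; have := pr i I; rewrite /= in_itv.
apply: fin_bigcap_measurable; first exact: finite_finset.
move=> i _; rewrite -[X in measurable X]setTI.
apply: (_ : measurable_fun setT _) => //; apply: measurableT_comp => //.
by apply: measurable_funB; apply: measurableT_comp (measurable_tnth i) _.
Qed.

Lemma measurable_supball x r : measurable (supball x r).
Proof.
have -> : supball x r = xsection
    [set p : d.-tuple R * d.-tuple R | forall i, `|tnth p.2 i - tnth p.1 i| <= r] x.
  by apply/seteqP; split => y; rewrite /xsection /= inE.
by apply: measurable_xsection; exact: measurable_supball_rel.
Qed.

Lemma lebesgue_supball (lam : {measure set (d.-tuple R) -> \bar R}) x r :
  is_lebesgue_nd lam -> 0 <= r -> lam (supball x r) = ((r *+ 2) ^+ d)%:E.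
Proof.
move=> hlam r0.
pose a := [tuple tnth x i - r | i < d]; pose b := [tuple tnth x i + r | i < d].
have -> : supball x r = [set y | forall i, tnth a i <= tnth y i <= tnth b i].
  by apply/seteqP; split => y /= yr i; have := yr i;
    rewrite !tnth_mktuple -ler_distlC distrC.
rewrite hlam; last by move=> i; rewrite !tnth_mktuple; lra.
rewrite -[in RHS](card_ord d) -prodr_const.
by congr (_%:E); apply: eq_bigr => i _; rewrite !tnth_mktuple; lra.
Qed.

Lemma sub_supball x y r0 r : supball x r0 y -> supball y r `<=` supball x (r0 + r).
Proof.
move=> xy z yz i.
rewrite -(subrK (tnth y i) (tnth z i)) -addrA.
rewrite [r0 + r]addrC (le_trans (ler_normD _ _))//; exact: lerD (yz i) (xy i).
Qed.

Lemma measurable_fun_measure_supballI (lam : {measure set (d.-tuple R) -> \bar R})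
    (U : set (d.-tuple R)) x r0 r :
  measurable U -> (lam (supball x (r0 + r)) < +oo)%E ->
  measurable_fun (supball x r0) (fun y => lam (supball y r `&` U)).
Proof.
move=> mU Kfin; have mK := measurable_supball x (r0 + r).
pose E := [set p : d.-tuple R * d.-tuple R | forall i, `|tnth p.2 i - tnth p.1 i| <= r]
  `&` (setT `*` U).
have mE : measurable E by apply: measurableI; [exact: measurable_supball_rel|exact: measurableX].
have mrestr_bounded : exists M : R, forall X, measurable X -> (mrestr lam mK X < M%:E)%E.
  exists (fine (lam (supball x (r0 + r))) + 1) => X mX.
  apply: le_lt_trans (le_measure _ _ _ (@subIsetr _ X _)) _; rewrite ?inE//.
    exact: measurableI.
  by rewrite -[X in (X < _)%E]fineK ?ge0_fin_numE ?measure_ge0// lte_fin ltrDl.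
have [_ /(measurable_funS measurableT (@subsetT _ (supball x r0)))] :=
  @measurable_prod_subset_xsection _ _ _ (d.-tuple R) R lam _ mK mrestr_bounded E mE.
apply: eq_measurable_fun => y /[!inE] xy; rewrite /mrestr; congr (lam _).
apply/seteqP; split => z; first by rewrite /xsection /= inE => -[[/= yz [_ Uz]] _].
move=> [yz Uz]; split; last exact: sub_supball xy _ yz.
by rewrite /xsection /= inE.
Qed.

End supball.

Section mu_ball.
Context {R : realType} {d : nat} (lam : {measure set (d.-tuple R) -> \bar R}).

Lemma mu_ball_in01 x l (A : set (d.-tuple R)) : measurable A ->
  (lam (supball x (2%:R ^ (- l))) < +oo)%E -> 0 <= mu_ball lam x l A <= 1.
Proof.
move=> mA Bfin; rewrite /mu_ball; set B := supball _ _.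
have mB : measurable B := measurable_supball x _.
have BA_le : (lam (B `&` A) <= lam B)%E.
  by apply: le_measure; rewrite ?inE//; exact: measurableI.
rewrite divr_ge0 ?fine_ge0 ?measure_ge0//=.
have [->|B_neq0] := eqVneq (fine (lam B)) 0; first by rewrite invr0 mulr0.
rewrite ler_pdivrMr ?mul1r ?lt0r ?B_neq0 ?fine_ge0 ?measure_ge0//.
by rewrite fine_le// ge0_fin_numE ?measure_ge0// (le_lt_trans BA_le).
Qed.

Lemma measurable_sigma_hat (U : set (d.-tuple R)) l x r0 :
  is_lebesgue_nd lam -> measurable U -> 0 <= r0 ->
  measurable_fun (supball x r0) (sigma_hat lam U l).
Proof.
move=> hlam mU r0_ge0; set r : R := 2%:R ^ (- l).
have r_ge0 : 0 <= r by exact/ltW/exprz_gt0.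
have -> : sigma_hat lam U l = fun y => fine (lam (supball y r `&` U)) * ((r *+ 2) ^+ d)^-1.
  by apply/funext => y; rewrite /sigma_hat /mu_ball lebesgue_supball.
apply: measurable_funM => //; apply: measurableT_comp => //.
apply: measurable_fun_measure_supballI => //.
by rewrite lebesgue_supball ?addr_ge0// ltry.
Qed.

End mu_ball.

Theorem lemma1p2 (R : realType) (d : nat)
  (lam : {measure set (d.-tuple R) -> \bar R})
  (U0 : set (d.-tuple R)) (x : d.-tuple R) (l l' : int) (delta : R) :
  (2 <= d)%N ->
  is_lebesgue_nd lam ->
  measurable U0 -> U0 !=set0 -> bounded_nd U0 ->
  l < l' ->
  let U1 := ~` U0 in
  let b := beta' lam U1 x l l' in
  let s := sigma_hat lam U1 l' in
  0 <= delta -> delta <= Num.min b (1 - b) ->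
  (mu_ball lam x l [set y | s y > b + delta] >= delta / 2 /\
   mu_ball lam x l [set y | s y < b - delta] >= delta / 2)
  \/
  mu_ball lam x l [set y | b - delta <= s y <= b + delta] >= 4^-1 - delta / 2.
Proof.
move=> _ hlam mU0 _ _ _ U1 b s delta_ge0; rewrite le_min => /andP[delta_le_b delta_le_1b].
have mU1 : measurable U1 by exact: measurableC.
have ball_fin y l1 : (lam (supball y (2%:R ^ (- l1))) < +oo)%E.
  by rewrite lebesgue_supball ?ltry// ltW// exprz_gt0.
have s01 y : 0 <= s y <= 1 by exact: mu_ball_in01.
set B := supball x (2%:R ^ (- l)).
have B_gt0 : 0 < fine (lam B).
  by rewrite /B lebesgue_supball ?ltW ?exprz_gt0//= exprn_gt0// pmulrn_rgt0// exprz_gt0.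
have ms : measurable_fun B s by apply: measurable_sigma_hat; rewrite // ltW// exprz_gt0.
have mean_s : Rintegral lam B s = b * fine (lam B) by rewrite /b /beta' divfK ?gt_eqF.
have := tails_or_middle_of_mean lam B s b delta (measurable_supball _ _) (ball_fin x l) ms
  (fun y _ => s01 y) delta_ge0 mean_s delta_le_b delta_le_1b.
by rewrite /mu_ball -/B !ler_pdivlMr.
Qed.
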